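(* Let $m\ge1$, $n\ge1$, $N>2n$, and let $\mathbf y$ be a stationary reciprocal process of order $n$ on $\mathbb Z_N$. For each $t$, write $\hat{\mathbb E}[\mathbf y(t)\mid \mathbf y(s),s\ne t]=-\sum_{k=-n,\,k\ne0}^{n}F_k(t)\,\mathbf y(t-k)$ (such a representation exists by reciprocity). Then the coefficient matrices $F_k(t)\in\mathbb R^{m\times m}$ can be taken independent of $t$; and if $\mathbf y$ is full rank, they are uniquely determined, do not depend on $t$, and are determined by the covariance lags $\Sigma_0,\Sigma_1,\dots,\Sigma_{2n}$ of the process.
   Context: A process on $\mathbb Z_N$ is a zero-mean second-order $\mathbb R^m$-valued process $\{\mathbf y(t)\}_{t=1}^N$, time indices taken modulo $N$, whose covariance $\boldsymbol\Sigma_N=\mathbb E\,\mathbf y\mathbf y^\top$ is symmetric block-circulant (its $(i,j)$ block depends only on $(i-j)\bmod N$); it is then stationary with lags $\Sigma_k=\mathbb E\,\mathbf y(t+k)\mathbf y(t)^\top$. It is full rank if $\boldsymbol\Sigma_N>0$. $\hat{\mathbb E}[\cdot\mid\cdot]$ is orthogonal projection onto the closed linear span of the scalar components of the conditioning variables. Subspaces $\mathcal A,\mathcal B$ are conditionally orthogonal given $\mathcal C$ if $a-\hat{\mathbb E}[a\mid\mathcal C]$ and $b-\hat{\mathbb E}[b\mid\mathcal C]$ are uncorrelated for all $a\in\mathcal A$, $b\in\mathcal B$. The process is reciprocal of order $n$ if for every cyclic interval $(t_1,t_2)$ the variables $\{\mathbf y(t):t\in(t_1,t_2)\}$ are conditionally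 orthogonal to $\{\mathbf y(s):s\notin(t_1,t_2)\}$ given $\mathbf y(t_1-n+1),\dots,\mathbf y(t_1),\mathbf y(t_2),\dots,\mathbf y(t_2+n-1)$; in particular $\hat{\mathbb E}[\mathbf y(t)\mid\mathbf y(s),s\ne t]=\hat{\mathbb E}[\mathbf y(t)\mid \mathbf y(t-n),\dots,\mathbf y(t-1),\mathbf y(t+1),\dots,\mathbf y(t+n)]$. *)

(* Second-order processes are modelled in the abstract
   Hilbert-space (L^2) setting: random variables are vectors of a real
   vector space H equipped with the covariance (semi-)inner product
   ip x y = E[x y]. *)
From HB Require Import structures.
From mathcomp Require Import all_boot all_order all_algebra.
Set Implicit Arguments. Unset Strict Implicit. Unset Printing Implicit Defensive.
Import Order.TTheory GRing.Theory Num.Theory.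
Local Open Scope ring_scope.

Definition semi_inner (R : numDomainType) (H : lmodType R) (ip : H -> H -> R) : Prop :=
  [/\ forall (a : R) (x y z : H), ip (a *: x + y) z = a * ip x z + ip y z,
      forall x y : H, ip x y = ip y x &
      forall x : H, 0 <= ip x x].

Section Process.
Variables (R : numDomainType) (H : lmodType R) (ip : H -> H -> R).
Variables (m N : nat).
(* the process: y t i is the i-th scalar component of y(t), t in Z_N *)
Variable y : 'Z_N -> 'I_m -> H.

(* v lies in the (closed = finite-dimensional) linear span of the scalar
   components of y(s), s in A *)
Definition in_span (A : {set 'Z_N}) (v : H) : Prop :=
  exists c : 'Z_N -> 'I_m -> R, v = \sum_(s in A) \sum_(i < m) c s i *: y s i.

(* p is the orthogonal projection  hatE[x | y(s), s in A] *)
Definition is_proj (A : {set 'Z_N}) (x p : H) : Prop :=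
  in_span A p /\ (forall s, s \in A -> forall i : 'I_m, ip (x - p) (y s i) = 0).

Definition cond_orth (A B C : {set 'Z_N}) : Prop :=
  forall a b pa pb, in_span A a -> in_span B b ->
    is_proj C a pa -> is_proj C b pb -> ip (a - pa) (b - pb) = 0.

Definition stationary : Prop :=
  forall (s t k : 'Z_N) (i j : 'I_m),
    ip (y (s + k) i) (y s j) = ip (y (t + k) i) (y t j).

Definition Sigma (k : int) : 'M[R]_m :=
  \matrix_(i, j) ip (y (k%:~R) i) (y 0 j).

(* full rank: Sigma_N > 0, i.e. c^T Sigma_N c > 0 for every c <> 0 *)
Definition full_rank : Prop :=
  forall c : 'Z_N -> 'I_m -> R, (exists s i, c s i != 0) ->
    0 < \sum_(s : 'Z_N) \sum_(i < m) \sum_(t : 'Z_N) \sum_(j < m)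
          c s i * ip (y s i) (y t j) * c t j.

(* open cyclic interval (t1, t2) = {t1+1, ..., t2-1} (mod N) *)
Definition cyc_open (t1 t2 : 'Z_N) : {set 'Z_N} :=
  [set s : 'Z_N | (0 < val (s - t1)%R < val (t2 - t1)%R)%N].

(* the boundary t1-n+1, ..., t1, t2, ..., t2+n-1 *)
Definition cyc_bdry (n : nat) (t1 t2 : 'Z_N) : {set 'Z_N} :=
  [set s : 'Z_N | [exists k : 'I_n,
     (s == t1 - (val k)%:R) || (s == t2 + (val k)%:R)]].

Definition reciprocal (n : nat) : Prop :=
  forall t1 t2 : 'Z_N,
    cond_orth (cyc_open t1 t2) (~: cyc_open t1 t2) (cyc_bdry n t1 t2).

Definition represents (n : nat) (F : int -> 'M[R]_m) (t : 'Z_N) : Prop :=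
  forall i : 'I_m,
    is_proj [set s | s != t] (y t i)
      (- \sum_(1 <= k < n.+1) \sum_(j < m)
           (F (k%:Z) i j *: y (t - (k%:Z)%:~R) j
            + F (- (k%:Z)) i j *: y (t + (k%:Z)%:~R) j)).

End Process.

(* By stationarity it is enough to project y(0) onto its 2n neighbours y(-n), ..., y(n)
   (y(0) excluded) and to shift the resulting coefficients F_k to every t.  Reciprocity
   applied to the interval (t-1, t+1), whose boundary is exactly this neighbourhood, shows
   that the residual is then orthogonal to every y(s), s <> t, so the neighbour projection is
   the projection onto all of them.  Conversely, the coefficients of any such representation
   satisfy the normal equations, which by stationarity involve only the covariances
   E y(a) y(l)^T with |a - l| <= 2n, i.e. Sigma_0, ..., Sigma_2n.  Two solutions differ by a
   combination of neighbours orthogonal to all of them, hence of zero norm, and full rank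
   forces its coefficients to vanish. *)

From HB Require Import structures.
From mathcomp Require Import all_boot all_order all_algebra.
From mathcomp Require Import reals.
From mathcomp Require Import ring lra zify.
From Stdlib Require Import ClassicalEpsilon.
Set Implicit Arguments. Unset Strict Implicit. Unset Printing Implicit Defensive.
Import Order.TTheory GRing.Theory Num.Theory.
Local Open Scope ring_scope.

Section SemiInner.
Variables (R : realFieldType) (H : lmodType R) (ip : H -> H -> R).
Hypothesis ip_semi : semi_inner ip.

Lemma ipC x y : ip x y = ip y x.
Proof. by case: ip_semi. Qed.

Lemma ipDl x y z : ip (x + y) z = ip x z + ip y z.
Proof. by case: ip_semi => h _ _; have := h 1 x y z; rewrite scale1r mul1r. Qed.

Lemma ip0l z : ip 0 z = 0.
Proof. by apply: (addrI (ip 0 z)); rewrite -ipDl !addr0. Qed.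

Lemma ipZl a x z : ip (a *: x) z = a * ip x z.
Proof. by case: ip_semi => h _ _; have := h a x 0 z; rewrite addr0 ip0l addr0. Qed.

Lemma ipBl x y z : ip (x - y) z = ip x z - ip y z.
Proof. by rewrite ipDl -scaleN1r ipZl mulN1r. Qed.

Lemma ipDr x y z : ip z (x + y) = ip z x + ip z y.
Proof. by rewrite ipC ipDl !(ipC z). Qed.

Lemma ipZr a x z : ip z (a *: x) = a * ip z x.
Proof. by rewrite ipC ipZl ipC. Qed.

Lemma ipBr x y z : ip z (x - y) = ip z x - ip z y.
Proof. by rewrite ipC ipBl !(ipC z). Qed.

Lemma ip_suml (I : Type) (r : seq I) (P : pred I) (F : I -> H) z :
  ip (\sum_(i <- r | P i) F i) z = \sum_(i <- r | P i) ip (F i) z.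
Proof. exact: (big_morph (ip^~ z) (fun x y => ipDl x y z) (ip0l z)). Qed.

Lemma ip_sumr (I : Type) (r : seq I) (P : pred I) (F : I -> H) z :
  ip z (\sum_(i <- r | P i) F i) = \sum_(i <- r | P i) ip z (F i).
Proof. by rewrite ipC ip_suml; apply: eq_bigr => i _; rewrite ipC. Qed.

(* If [ip z w <> 0], then [z + a w] with [a w = -(ip z z + 1) / (2 ip z w)]
   would have negative square norm. *)
Lemma ip_isotropic w z : ip w w = 0 -> ip z w = 0.
Proof.
move=> ww0; apply/eqP/negPn/negP => zw0.
pose a := - (ip z z + 1) / (2 * ip z w).
have az : a * ip z w = - (ip z z + 1) / 2 by rewrite /a; field; rewrite zw0.
case: ip_semi => _ _ /(_ (z + a *: w)).
rewrite !ipDl !ipDr !ipZl !ipZr ww0 (ipC w z) !mulr0 addr0 az.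
lra.
Qed.

Variables (I : finType) (f : I -> H).

Definition proj_coef (A : {set I}) (x : H) (c : I -> R) : Prop :=
  forall j, j \in A -> ip (x - \sum_(i in A) c i *: f i) (f j) = 0.

Lemma proj_coef_setD1 (A : {set I}) a x : a \in A ->
    (forall v, exists c, proj_coef (A :\ a) v c) -> exists c, proj_coef A x c.
Proof.
move=> Aa IH; set A' := A :\ a.
have [c1 c1P] := IH x; have [c2 c2P] := IH (f a).
set p1 := \sum_(i in A') c1 i *: f i in c1P.
set q := \sum_(i in A') c2 i *: f i in c2P.
set w := f a - q in c2P.
have sumA c : \sum_(i in A) c i *: f i = c a *: f a + \sum_(i in A') c i *: f i.
  by rewrite (bigD1 a) //=; congr (_ + _); apply: eq_bigl => i; rewrite in_setD1 andbC.
have q_orth v : (forall j, j \in A' -> ip v (f j) = 0) -> ip v q = 0.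
  by move=> vA'; rewrite ip_sumr big1 // => i /vA' vi; rewrite ipZr vi mulr0.
have faE : f a = w + q by rewrite subrK.
have [ww0|ww_neq0] := eqVneq (ip w w) 0.
  (* [f a] is [q] up to an isotropic vector: the old coefficients still work *)
  exists (fun i => if i == a then 0 else c1 i) => j Aj.
  have -> : \sum_(i in A) (if i == a then 0 else c1 i) *: f i = p1.
    rewrite sumA eqxx scale0r add0r; apply: eq_bigr => i.
    by rewrite in_setD1 => /andP[/negbTE ->].
  have [->|ja] := eqVneq j a; last by apply: c1P; rewrite in_setD1 ja.
  by rewrite faE ipDr (ip_isotropic _ ww0) add0r q_orth.
pose al := ip (x - p1) w / ip w w.
exists (fun i => if i == a then al else c1 i - al * c2 i) => j Aj.
have -> : \sum_(i in A) (if i == a then al else c1 i - al * c2 i) *: f i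
    = p1 + al *: w.
  rewrite sumA eqxx (eq_bigr (fun i => c1 i *: f i - al *: (c2 i *: f i))).
    by rewrite sumrB -scaler_sumr scalerBr addrCA.
  by move=> i; rewrite in_setD1 => /andP[/negbTE -> _]; rewrite scalerBl scalerA.
have orthA' j' : j' \in A' -> ip (x - (p1 + al *: w)) (f j') = 0.
  by move=> A'j; rewrite opprD addrA ipBl ipZl c1P // c2P // mulr0 subr0.
have [->|ja] := eqVneq j a; last by apply: orthA'; rewrite in_setD1 ja.
rewrite faE ipDr q_orth // addr0.
by rewrite opprD addrA ipBl ipZl /al divfK // subrr.
Qed.

Lemma proj_coef_exists (A : {set I}) x : exists c, proj_coef A x c.
Proof.
elim: {A}#|A| {-2}A (eqxx #|A|) x => [|k IH] A /eqP cardA x.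
  by exists (fun=> 0) => j; rewrite (cards0_eq cardA) in_set0.
have [a Aa] : exists a, a \in A by apply/set0Pn; rewrite -card_gt0 cardA.
apply: (proj_coef_setD1 x Aa) => v; apply: IH.
by move: cardA; rewrite (cardsD1 a) Aa add1n => -[->].
Qed.

End SemiInner.

Lemma sum_nat_pick (R : pzSemiRingType) a b c (f : nat -> R) :
  (a <= c < b)%N -> \sum_(a <= k < b) (c == k)%:R * f k = f c.
Proof.
move=> c_ab; rewrite (bigD1_seq c) ?mem_index_iota ?iota_uniq //= eqxx mul1r.
by rewrite big1 ?addr0 // => k; rewrite eq_sym => /negbTE ->; rewrite mul0r.
Qed.

Definition nbr_offset (n : nat) (l : int) : bool := (l != 0) && (- n%:Z <= l <= n%:Z).

Section NormalEquations.
Variables (R : numDomainType) (m n : nat).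

(* E y(t+a) y(t+l)^T in terms of the lags [S k = Sigma_k], k >= 0, using Sigma_(-k) = Sigma_k^T *)
Definition lag_cov (S : int -> 'M[R]_m) (a l : int) (j j' : 'I_m) : R :=
  if l <= a then S (a - l) j j' else S (l - a) j' j.

Definition normal_lhs (S G : int -> 'M[R]_m) (i : 'I_m) (l : int) (j' : 'I_m) : R :=
  lag_cov S 0 l i j' + \sum_(1 <= k < n.+1) \sum_(j < m)
    (G k%:Z i j * lag_cov S (- k%:Z) l j j' + G (- k%:Z) i j * lag_cov S k%:Z l j j').

Definition normal_eqs (S G : int -> 'M[R]_m) : Prop :=
  forall i j' l, nbr_offset n l -> normal_lhs S G i l j' = 0.

End NormalEquations.

Section Process.
Variables (R : realFieldType) (H : lmodType R) (ip : H -> H -> R).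
Variables (m N n : nat) (y : 'Z_N -> 'I_m -> H).
Hypotheses (ip_semi : semi_inner ip) (n_gt0 : (0 < n)%N) (nN : (2 * n < N)%N).

Lemma val_Zp_nat k : (k < N)%N -> val (k%:R : 'Z_N) = k.
Proof. by move=> kN; rewrite Zp_nat /= Zp_cast ?modn_small //; lia. Qed.

Lemma intr_Zp_eq0 (z : int) : (`|z| < N)%N -> ((z%:~R : 'Z_N) == 0) = (z == 0).
Proof.
case: z => k /= kN.
  by rewrite -[_ == 0](inj_eq val_inj) val_Zp_nat.
by rewrite NegzE intrN oppr_eq0 -[_ == 0](inj_eq val_inj) val_Zp_nat.
Qed.

Lemma addr_offset_inj (t : 'Z_N) (a b : int) :
  - n%:Z <= a <= n%:Z -> - n%:Z <= b <= n%:Z ->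
  (t + a%:~R == t + b%:~R) = (a == b).
Proof.
move=> a_n b_n; rewrite (inj_eq (addrI t)) -subr_eq0 -intrB intr_Zp_eq0 ?subr_eq0 //.
lia.
Qed.

Lemma cyc_open_pred_succ (t : 'Z_N) : cyc_open (t - 1) (t + 1) = [set t].
Proof.
rewrite /cyc_open (_ : t + 1 - (t - 1) = 2%:R); last by rewrite mulr2n; ring.
apply/setP => s; rewrite !inE val_Zp_nat; last by lia.
apply/idP/eqP => [s_t|->]; last by rewrite (_ : t - (t - 1) = 1%:R) ?val_Zp_nat //; [lia|ring].
have s1 : s - (t - 1) = 1 by rewrite -[LHS]natr_Zp (_ : val _ = 1%N) //; lia.
by move/eqP: s1; rewrite subr_eq => /eqP ->; ring.
Qed.

Lemma mem_cyc_bdry_pred_succ (t s : 'Z_N) :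
  reflect (exists2 l, nbr_offset n l & s = t + l%:~R) (s \in cyc_bdry n (t - 1) (t + 1)).
Proof.
rewrite inE; apply: (iffP existsP) => [[k /orP[]/eqP ->]|[l + ->]].
- exists (- k.+1%:Z); first by have := ltn_ord k; rewrite /nbr_offset; lia.
  by ring.
- exists (k.+1%:Z); first by have := ltn_ord k; rewrite /nbr_offset; lia.
  by ring.
- case: l => l; rewrite /nbr_offset => l_off.
    have l_n : (l.-1 < n)%N by lia.
    exists (Ordinal l_n); apply/orP; right; apply/eqP => /=.
    by rewrite -[in LHS](@prednK l); [ring | lia].
  have l_n : (l < n)%N by lia.
  exists (Ordinal l_n); apply/orP; left; apply/eqP => /=.
  by rewrite NegzE; ring.
Qed.

Lemma span_orth (A : {set 'Z_N}) v w :
  (forall s, s \in A -> forall j, ip v (y s j) = 0) -> in_span y A w -> ip v w = 0.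
Proof.
move=> vA [c ->]; rewrite (ip_sumr ip_semi) big1 // => s As.
by rewrite (ip_sumr ip_semi) big1 // => j _; rewrite (ipZr ip_semi) vA // mulr0.
Qed.

Lemma in_spanN (A : {set 'Z_N}) w : in_span y A w -> in_span y A (- w).
Proof.
case=> c ->; exists (fun s j => - c s j); rewrite -sumrN; apply: eq_bigr => s _.
by rewrite -sumrN; apply: eq_bigr => j _; rewrite scaleNr.
Qed.

Lemma in_span_gen (A : {set 'Z_N}) s i : s \in A -> in_span y A (y s i).
Proof.
move=> As; exists (fun s' j => ((s' == s) && (j == i))%:R); apply: esym.
rewrite (bigD1 s) //= [X in _ + X]big1 ?addr0 => [|s' /andP[_ /negbTE ->]]; last first.
  by apply: big1 => j _; rewrite scale0r.
rewrite (bigD1 i) //= !eqxx scale1r [X in _ + X]big1 ?addr0 // => j /negbTE ->.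
by rewrite scale0r.
Qed.

Lemma proj_exists (A : {set 'Z_N}) x : exists p, is_proj ip y A x p.
Proof.
have [c cP] :=
  proj_coef_exists ip_semi (fun p : 'Z_N * 'I_m => y p.1 p.2) [set p | p.1 \in A] x.
exists (\sum_(p in [set p | p.1 \in A]) c p *: y p.1 p.2); split; last first.
  by move=> s As j; apply: (cP (s, j)); rewrite inE.
exists (fun s j => c (s, j)); rewrite pair_big_dep /=.
by apply: eq_big => [[s j]|[s j] _]; rewrite ?inE ?andbT.
Qed.

Lemma reciprocal_proj_punctured t i p : reciprocal ip y n ->
  is_proj ip y (cyc_bdry n (t - 1) (t + 1)) (y t i) p -> in_span y [set s | s != t] p ->
  is_proj ip y [set s | s != t] (y t i) p.
Proof.
set B := cyc_bdry n _ _ => rec [pB pO] pS; split => // s; rewrite inE => s_t j.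
have [/pO//|sB] := boolP (s \in B).
have [q qP] := proj_exists B (y s j).
have open_t : t \in cyc_open (t - 1) (t + 1) by rewrite cyc_open_pred_succ set11.
have open_s : s \in ~: cyc_open (t - 1) (t + 1) by rewrite inE cyc_open_pred_succ inE.
have := rec _ _ _ _ p q (in_span_gen i open_t) (in_span_gen j open_s) (conj pB pO) qP.
by rewrite (ipBr ip_semi) (span_orth pO qP.1) subr0.
Qed.

Definition nbr_comb (G : int -> 'M[R]_m) (t : 'Z_N) (i : 'I_m) : H :=
  \sum_(1 <= k < n.+1) \sum_(j < m)
     (G k%:Z i j *: y (t - (k%:Z)%:~R) j + G (- k%:Z) i j *: y (t + (k%:Z)%:~R) j).

Definition nbr_coef (G : int -> 'M[R]_m) (t : 'Z_N) (i : 'I_m) (s : 'Z_N) (j : 'I_m) : R :=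
  \sum_(1 <= k < n.+1)
    ((s == t - (k%:Z)%:~R)%:R * G k%:Z i j + (s == t + (k%:Z)%:~R)%:R * G (- k%:Z) i j).

Lemma nbr_coef_offset G t i l j :
  nbr_offset n l -> nbr_coef G t i (t + l%:~R) j = G (- l) i j.
Proof.
rewrite /nbr_offset => l_off.
transitivity (\sum_(1 <= k < n.+1)
    ((l == - k%:Z)%:R * G k%:Z i j + (l == k%:Z)%:R * G (- k%:Z) i j)).
  by apply: eq_big_nat => k k_n; rewrite -intrN !addr_offset_inj //; lia.
case: l l_off => l l_off.
- rewrite -(sum_nat_pick (fun k => G (- k%:Z) i j) (_ : 1 <= l < n.+1)%N); last by lia.
  apply: eq_big_nat => k k_n; rewrite eqz_nat (_ : (_ == _) = false) ?mul0r ?add0r //.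
  by apply/negbTE; lia.
- rewrite NegzE opprK -(sum_nat_pick (fun k => G k%:Z i j) (_ : 1 <= l.+1 < n.+1)%N).
    apply: eq_big_nat => k k_n; rewrite eqr_opp eqz_nat.
    by rewrite (_ : (- l.+1%:Z == k%:Z) = false) ?mul0r ?addr0 //; apply/negbTE; lia.
  by rewrite NegzE in l_off; lia.
Qed.

Lemma nbr_comb_coefE (A : {set 'Z_N}) G t i :
  (forall l, nbr_offset n l -> t + l%:~R \in A) ->
  \sum_(s in A) \sum_(j < m) nbr_coef G t i s j *: y s j = nbr_comb G t i.
Proof.
move=> A_nbr.
have pick u (g : 'Z_N -> H) (r : R) : u \in A ->
    \sum_(s in A) ((s == u)%:R * r) *: g s = r *: g u.
  move=> Au; rewrite (bigD1 u) //= eqxx mul1r big1 ?addr0 // => s /andP[_ /negbTE ->].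
  by rewrite mul0r scale0r.
under eq_bigr do under eq_bigr do rewrite scaler_suml.
rewrite exchange_big /=; under eq_bigr do rewrite exchange_big /=.
rewrite exchange_big /=; apply: eq_big_nat => k k_n; apply: eq_bigr => j _.
rewrite (eq_bigr _ (fun s _ => scalerDl _ _ _)) big_split /= !pick // -?intrN.
all: by apply: A_nbr; rewrite /nbr_offset; lia.
Qed.

Lemma nbr_comb_in_span (A : {set 'Z_N}) G t i :
  (forall l, nbr_offset n l -> t + l%:~R \in A) -> in_span y A (nbr_comb G t i).
Proof. by move=> A_nbr; exists (nbr_coef G t i); rewrite nbr_comb_coefE. Qed.

Lemma addr_offset_neq (t : 'Z_N) l : nbr_offset n l -> (t + l%:~R == t) = false.
Proof.
rewrite /nbr_offset => l_off.
have := @addr_offset_inj t l 0; rewrite mulr0z addr0 => -> //; first by apply/negbTE; lia.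
all: lia.
Qed.

Definition nbr_orth (G : int -> 'M[R]_m) (t : 'Z_N) : Prop :=
  forall i l j, nbr_offset n l -> ip (y t i + nbr_comb G t i) (y (t + l%:~R) j) = 0.

Lemma represents_of_nbr_orth G t :
  reciprocal ip y n -> nbr_orth G t -> represents ip y n G t.
Proof.
move=> rec orth i; apply: reciprocal_proj_punctured => //.
  split=> [|s /mem_cyc_bdry_pred_succ [l l_off ->] j]; last by rewrite opprK orth.
  by apply/in_spanN/nbr_comb_in_span => l l_off; apply/mem_cyc_bdry_pred_succ; exists l.
by apply/in_spanN/nbr_comb_in_span => l l_off; rewrite inE addr_offset_neq.
Qed.

Lemma nbr_orth_of_represents G t : represents ip y n G t -> nbr_orth G t.
Proof.
move=> rep i l j l_off; have [_ pO] := rep i.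
by rewrite -[nbr_comb _ _ _]opprK pO // inE addr_offset_neq.
Qed.

Lemma nbr_combB G1 G2 t i :
  nbr_comb (fun z => G1 z - G2 z) t i = nbr_comb G1 t i - nbr_comb G2 t i.
Proof.
rewrite -sumrB; apply: eq_bigr => k _; rewrite -sumrB; apply: eq_bigr => j _.
by rewrite !mxE !scalerBl opprD addrACA.
Qed.

Lemma nbr_comb_ip G t i z : ip (nbr_comb G t i) z =
  \sum_(1 <= k < n.+1) \sum_(j < m)
     (G k%:Z i j * ip (y (t - (k%:Z)%:~R) j) z + G (- k%:Z) i j * ip (y (t + (k%:Z)%:~R) j) z).
Proof.
rewrite (ip_suml ip_semi); apply: eq_bigr => k _; rewrite (ip_suml ip_semi).
by apply: eq_bigr => j _; rewrite (ipDl ip_semi) !(ipZl ip_semi).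
Qed.

Lemma full_rank_coef_eq0 (c : 'Z_N -> 'I_m -> R) (v : H) : full_rank ip y ->
  v = \sum_s \sum_(i < m) c s i *: y s i -> ip v v = 0 -> forall s i, c s i = 0.
Proof.
move=> fr vE vv0 s i; apply/eqP/negPn/negP => c_neq0.
have := fr c (ex_intro _ s (ex_intro _ i c_neq0)).
suff -> : \sum_s \sum_(i < m) \sum_u \sum_(j < m) c s i * ip (y s i) (y u j) * c u j = ip v v.
  by rewrite vv0 ltxx.
rewrite vE (ip_suml ip_semi); apply: eq_bigr => s' _; rewrite (ip_suml ip_semi).
apply: eq_bigr => i' _; rewrite (ipZl ip_semi) (ip_sumr ip_semi) mulr_sumr.
apply: eq_bigr => u _; rewrite (ip_sumr ip_semi) mulr_sumr; apply: eq_bigr => j _.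
by rewrite (ipZr ip_semi); ring.
Qed.

Lemma nbr_orth_unique G1 G2 t : full_rank ip y -> nbr_orth G1 t -> nbr_orth G2 t ->
  forall k, nbr_offset n k -> G1 k = G2 k.
Proof.
move=> fr orth1 orth2 k k_off; apply/matrixP => i j; apply/eqP; rewrite -subr_eq0.
pose D z := G1 z - G2 z.
have B_nbr l : nbr_offset n l -> t + l%:~R \in cyc_bdry n (t - 1) (t + 1).
  by move=> l_off; apply/mem_cyc_bdry_pred_succ; exists l.
have d_orth : ip (nbr_comb D t i) (nbr_comb D t i) = 0.
  apply: (span_orth _ (nbr_comb_in_span D i B_nbr)).
  move=> _ /mem_cyc_bdry_pred_succ[l l_off ->] j'.
  rewrite nbr_combB -(addrKA (y t i)) [nbr_comb G1 t i + _]addrC (ipBl ip_semi).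
  by rewrite orth1 // orth2 // subrr.
have dE : nbr_comb D t i = \sum_s \sum_(j < m) nbr_coef D t i s j *: y s j.
  rewrite -(nbr_comb_coefE (A := setT)) => [|l _]; last exact: in_setT.
  by apply: eq_bigl => s; rewrite in_setT.
have := full_rank_coef_eq0 fr dE d_orth (t + (- k)%:~R) j.
rewrite nbr_coef_offset ?opprK ?mxE => [->//|]; move: k_off; rewrite /nbr_offset; lia.
Qed.

Lemma nbr_orth_exists : exists G, nbr_orth G 0.
Proof.
pose B := cyc_bdry n (0 - 1) (0 + 1 : 'Z_N).
have cP i : exists c : 'Z_N -> 'I_m -> R, forall s, s \in B -> forall j,
    ip (y 0 i - \sum_(s in B) \sum_(j < m) c s j *: y s j) (y s j) = 0.
  by have [_ [[c ->] pO]] := proj_exists B (y 0 i); exists c.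
have [c {}cP] := fin_all_exists cP.
(* the coefficient of y(0 - k) in the projection of y(0) is -F_k *)
pose G z := \matrix_(i, j) - c i ((- z)%:~R) j.
exists G => i l j l_off.
suff -> : nbr_comb G 0 i = - \sum_(s in B) \sum_(j < m) c i s j *: y s j.
  by apply: cP; apply/mem_cyc_bdry_pred_succ; exists l.
rewrite -(nbr_comb_coefE (A := B)) => [|l' l'_off]; last first.
  by apply/mem_cyc_bdry_pred_succ; exists l'.
rewrite -sumrN; apply: eq_bigr => _ /mem_cyc_bdry_pred_succ [l' l'_off ->].
rewrite -sumrN; apply: eq_bigr => j' _.
by rewrite nbr_coef_offset // mxE opprK add0r scaleNr.
Qed.

Section Stationary.
Hypothesis y_stat : stationary ip y.

Lemma stationary_shift t a b i j : ip (y (t + a) i) (y (t + b) j) = ip (y a i) (y b j).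
Proof. by have := y_stat (t + b) b (a - b) i j; rewrite -addrA !(addrC b) !subrK. Qed.

Lemma nbr_resid_shift G t i a j :
  ip (y t i + nbr_comb G t i) (y (t + a) j) = ip (y 0 i + nbr_comb G 0 i) (y a j).
Proof.
rewrite !(ipDl ip_semi) !nbr_comb_ip; congr (_ + _).
  by have := stationary_shift t 0 a i j; rewrite addr0.
apply: eq_bigr => k _; apply: eq_bigr => j' _.
by rewrite !stationary_shift sub0r add0r.
Qed.

Lemma nbr_orth_shift G t : nbr_orth G 0 -> nbr_orth G t.
Proof. by move=> orth0 i l j /(orth0 i l j); rewrite add0r nbr_resid_shift. Qed.

Definition lags (j : int) : 'M[R]_m :=
  if (0 <= j <= (2 * n)%N%:Z) then Sigma ip y j else 0.

Lemma ip_lag_cov t a l j j' : - n%:Z <= a <= n%:Z -> - n%:Z <= l <= n%:Z ->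
  ip (y (t + a%:~R) j) (y (t + l%:~R) j') = lag_cov lags a l j j'.
Proof.
move=> a_n l_n; have shift u v : t + u%:~R = t + v%:~R + (u - v)%:~R by rewrite intrB; ring.
rewrite /lag_cov /lags; case: ifP => la; rewrite ifT ?mxE; try lia.
  by rewrite (shift a l) -[X in y X j']addr0 stationary_shift.
by rewrite (ipC ip_semi) (shift l a) -[X in y X j]addr0 stationary_shift.
Qed.

Lemma nbr_resid_lags G t i l j' : - n%:Z <= l <= n%:Z ->
  ip (y t i + nbr_comb G t i) (y (t + l%:~R) j') = normal_lhs n lags G i l j'.
Proof.
move=> l_n; rewrite (ipDl ip_semi) nbr_comb_ip; congr (_ + _).
  by rewrite -(ip_lag_cov t) ?mulr0z ?addr0 //; lia.
apply: eq_big_nat => k k_n; apply: eq_bigr => j _.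
by rewrite -!(ip_lag_cov t) ?intrN //; lia.
Qed.

Lemma nbr_orth_normal_eqs G t : nbr_orth G t <-> normal_eqs n lags G.
Proof.
split=> [orth i j l|eqs i l j] l_off;
  have l_n : - n%:Z <= l <= n%:Z by move: l_off; rewrite /nbr_offset; lia.
  by rewrite -(nbr_resid_lags _ t) // orth.
by rewrite nbr_resid_lags // eqs.
Qed.

End Stationary.

End Process.

Theorem lemma1 (R : realType) (m n N : nat) :
  (1 <= m)%N -> (1 <= n)%N -> (2 * n < N)%N ->
  (forall (H : lmodType R) (ip : H -> H -> R) (y : 'Z_N -> 'I_m -> H),
     semi_inner ip -> stationary ip y -> reciprocal ip y n ->
     exists F : int -> 'M[R]_m, forall t : 'Z_N, represents ip y n F t)
  /\
  (exists Phi : (int -> 'M[R]_m) -> int -> 'M[R]_m,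
     forall (H : lmodType R) (ip : H -> H -> R) (y : 'Z_N -> 'I_m -> H),
       semi_inner ip -> stationary ip y -> reciprocal ip y n -> full_rank ip y ->
       forall (t : 'Z_N) (F : int -> 'M[R]_m), represents ip y n F t ->
         forall k : int, k != 0 -> - (n%:Z) <= k <= n%:Z ->
           F k = Phi (fun j : int => if (0 <= j <= (2 * n)%N%:Z) then Sigma ip y j else 0) k).
Proof.
move=> _ n_gt0 nN; split=> [H ip y ip_semi y_stat rec|].
  have [F orth0] := nbr_orth_exists y ip_semi n_gt0 nN.
  by exists F => t; apply: represents_of_nbr_orth => //; apply: nbr_orth_shift.
exists (fun S => epsilon (inhabits (fun=> 0)) (normal_eqs n S)).
move=> H ip y ip_semi y_stat _ fr t F rep k k_neq0 k_n.
have normal_eqsE := nbr_orth_normal_eqs ip_semi n_gt0 nN y_stat.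
have F_orth := nbr_orth_of_represents n_gt0 nN rep.
have G_eqs := epsilon_spec (inhabits (fun=> 0)) _ (ex_intro _ F ((normal_eqsE F t).1 F_orth)).
apply: (nbr_orth_unique ip_semi n_gt0 nN fr F_orth ((normal_eqsE _ t).2 G_eqs)).
by rewrite /nbr_offset k_neq0.
Qed.
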